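(* Let $\Gamma$ be a simply connected closed surface approximated by a triangular mesh with $N$ edges, $N_S$ triangles and $N_L$ vertices, and let $\mathsf{\Sigma}$, $\mathsf{\Lambda}$, $\mathsf{G}$, $\mathsf{G}_p$, $\mathsf{G}_\lambda$, $\mathbb{G}$, $\mathbb{G}_{\tilde p}$, $\mathbb{G}_{\tilde\lambda}$ be as in the context. Define the normalized Loop and Star matrices $\tilde{\mathsf{\Sigma}}=\mathsf{G}^{-1/2}\mathsf{\Sigma}\mathsf{G}_p^{1/2}$, $\tilde{\mathsf{\Lambda}}=\mathsf{G}^{1/2}\mathsf{\Lambda}\mathsf{G}_\lambda^{-1/2}$ and the dually-normalized ones $\tilde{\mathbb{\Sigma}}=\mathbb{G}^{1/2}\mathsf{\Sigma}\mathbb{G}_{\tilde\lambda}^{-1/2}$, $\tilde{\mathbb{\Lambda}}=\mathbb{G}^{-1/2}\mathsf{\Lambda}\mathbb{G}_{\tilde p}^{1/2}$, and the projectors $\tilde{\mathsf{P}}^\Sigma=\tilde{\mathsf{\Sigma}}(\tilde{\mathsf{\Sigma}}^{\mathrm T}\tilde{\mathsf{\Sigma}})^+\tilde{\mathsf{\Sigma}}^{\mathrm T}$, $\tilde{\mathsf{P}}^\Lambda=\tilde{\mathsf{\Lambda}}(\tilde{\mathsf{\Lambda}}^{\mathrm T}\tilde{\mathsf{\Lambda}})^+\tilde{\mathsf{\Lambda}}^{\mathrm T}$, $\tilde{\mathbb{P}}^\Sigma=\tilde{\mathbb{\Sigma}}(\tilde{\mathbb{\Sigma}}^{\mathrm T}\tilde{\mathbb{\Sigma}})^+\tilde{\mathbb{\Sigma}}^{\mathrm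 T}$, $\tilde{\mathbb{P}}^\Lambda=\tilde{\mathbb{\Lambda}}(\tilde{\mathbb{\Lambda}}^{\mathrm T}\tilde{\mathbb{\Lambda}})^+\tilde{\mathbb{\Lambda}}^{\mathrm T}$. Then $$\tilde{\mathsf{P}}^\Lambda+\tilde{\mathsf{P}}^\Sigma=\mathsf{I}\qquad\text{and}\qquad \tilde{\mathbb{P}}^\Lambda+\tilde{\mathbb{P}}^\Sigma=\mathsf{I},$$ where $\mathsf{I}$ is the $N\times N$ identity.
   Context: Each edge $m$ of the mesh is shared by two triangles $c_m^+$, $c_m^-$. The Star-to-RWG matrix $\mathsf{\Sigma}\in\mathbb{R}^{N\times N_S}$ has $[\mathsf{\Sigma}]_{mn}=1$ if cell $n$ is $c_m^+$, $-1$ if cell $n$ is $c_m^-$, $0$ otherwise. The Loop-to-RWG matrix $\mathsf{\Lambda}\in\mathbb{R}^{N\times N_L}$ has $[\mathsf{\Lambda}]_{mn}=\pm1$ when vertex $n$ is an endpoint of edge $m$ (opposite signs for the two endpoints, fixed by the orientation convention of the RWG functions), $0$ otherwise; with this convention $\mathsf{\Sigma}^{\mathrm T}\mathsf{\Lambda}=\mathsf{0}$, and $\mathsf{\Sigma}\vec{s}+\mathsf{\Lambda}\vec{l}$ spans $\mathbb{R}^N$ on a simply connected closed surface (the discrete quasi-Helmholtz decomposition has no harmonic part). Gram matrices (all symmetric positive definite): $[\mathsf{G}]_{mn}=\langle\mathbf{f}_m,\mathbf{f}_n\rangle$ for the RWG basis functions $\mathbf{f}_n$ associated with the edges; $[\mathbb{G}]_{mn}=\langle\mathbf{g}_m,\mathbf{g}_n\rangle$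 for the dual (Buffa–Christiansen) edge functions $\mathbf{g}_n$; $[\mathsf{G}_p]_{mn}=\langle p_m,p_n\rangle$ with $p_m=1/A_m$ on triangle $c_m$ (area $A_m$) and $0$ elsewhere; $[\mathsf{G}_\lambda]_{mn}=\langle\lambda_m,\lambda_n\rangle$ for the piecewise-linear hat (pyramid) functions $\lambda_m$ at the vertices; $\mathbb{G}_{\tilde p}$ and $\mathbb{G}_{\tilde\lambda}$ are the Gram matrices of the dual patch functions (one per vertex) and dual pyramid functions (one per triangle) on the barycentric refinement. $\langle a,b\rangle=\int_\Gamma a\cdot b\,dS$. Matrix square roots are the symmetric positive definite ones; $^+$ is the Moore–Penrose pseudo-inverse. *)

From Stdlib Require Import ClassicalEpsilon.
From mathcomp Require Import all_boot all_algebra.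
From mathcomp Require Import reals.
Set Implicit Arguments. Unset Strict Implicit. Unset Printing Implicit Defensive.
Import GRing.Theory Num.Theory.
Local Open Scope ring_scope.

Section Defs.
Variable R : realType.

Definition spd (n : nat) (A : 'M[R]_n) : Prop :=
  A^T = A /\ forall v : 'cV[R]_n, v != 0 -> 0 < (v^T *m A *m v) 0 0.

(* The symmetric positive definite square root: the (unique) S, SPD, with S*S = A
   (chosen by Hilbert's epsilon; 0 if no such S exists). *)
Definition sqrtm (n : nat) (A : 'M[R]_n) : 'M[R]_n :=
  epsilon (inhabits 0) (fun S : 'M[R]_n => spd S /\ S *m S = A).

Definition penrose (m n : nat) (A : 'M[R]_(m, n)) (X : 'M[R]_(n, m)) : Prop :=
  [/\ A *m X *m A = A, X *m A *m X = X,
      (A *m X)^T = A *m X & (X *m A)^T = X *m A].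

Definition pinv (m n : nat) (A : 'M[R]_(m, n)) : 'M[R]_(n, m) :=
  epsilon (inhabits 0) (fun X => penrose A X).

Definition projm (m n : nat) (A : 'M[R]_(m, n)) : 'M[R]_m :=
  A *m pinv (A^T *m A) *m A^T.

(* Star-to-RWG matrix: edge m has cells cp m (= c_m^+) and cm m (= c_m^-). *)
Definition starRWG (N NS : nat) (cp cm : 'I_N -> 'I_NS) : 'M[R]_(N, NS) :=
  \matrix_(m, n) (if n == cp m then 1 else if n == cm m then -1 else 0).

(* Loop-to-RWG matrix: edge m has endpoints va m (sign +1) and vb m (sign -1);
   which endpoint is called va encodes the orientation convention. *)
Definition loopRWG (N NL : nat) (va vb : 'I_N -> 'I_NL) : 'M[R]_(N, NL) :=
  \matrix_(m, n) (if n == va m then 1 else if n == vb m then -1 else 0).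

End Defs.

(* Both identities have the shape projm (S Y U^-1) + projm (S^-1 X T) = 1, where
   X^T Y = 0, the columns of X and Y together span R^N, S is the symmetric square
   root of an SPD Gram matrix K, and T, U are invertible.  The two normalized
   matrices have orthogonal ranges, and a vector z orthogonal to both yields
   w = S^-1 z with X^T w = 0 and Y^T K w = 0; writing w = X s + Y l, the first
   equation forces X s = 0 and the second then gives w^T K w = 0, so w = 0.
   Orthogonal projectors onto orthogonal subspaces filling R^N sum to 1.
   The Moore-Penrose inverse exists by a full-rank factorization, and the SPD
   square root is T^2 with T = q(A), q interpolating the fourth root on the
   eigenvalues of A given by the complex spectral theorem. *)

From Stdlib Require Import ClassicalEpsilon.
From mathcomp Require Import all_boot all_order all_algebra.
From mathcomp Require Import reals spectral complex.
Import Order.TTheory GRing.Theory Num.Theory.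
Local Open Scope ring_scope.
Set Implicit Arguments. Unset Strict Implicit.

Lemma lagrange_interpolation (F : fieldType) (f : F -> F) (s : seq F) :
  exists q : {poly F}, {in s, forall x, q.[x] = f x}.
Proof.
elim: s => [|a s [q qE]]; first by exists 0.
have [as_|aNs] := boolP (a \in s).
  by exists q => x; rewrite inE => /predU1P[->|]; apply: qE.
pose w := \prod_(b <- s) ('X - b%:P).
have w0 x : x \in s -> w.[x] = 0.
  move=> xs; apply/eqP; rewrite horner_prod prodf_seq_eq0.
  by apply/hasP; exists x; rewrite //= hornerXsubC subrr.
have wa : w.[a] != 0.
  rewrite horner_prod prodf_seq_neq0; apply/allP => b bs /=.
  by rewrite hornerXsubC subr_eq0; apply: contraNneq aNs => ->.
exists (q + ((f a - q.[a]) / w.[a]) *: w) => x; rewrite inE hornerD hornerZ.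
case/predU1P => [->|xs]; first by rewrite divfK // addrC subrK.
by rewrite (w0 x xs) mulr0 addr0 qE.
Qed.

Lemma tr_mulmx_self_eq0 (R : realDomainType) m n (C : 'M[R]_(m, n)) :
  (C^T *m C == 0) = (C == 0).
Proof.
apply/eqP/eqP => [CC0|->]; last by rewrite mulmx0.
apply/matrixP => i j; apply/eqP; rewrite mxE -sqrf_eq0.
have /eqP := congr1 (fun M : 'M_n => M j j) CC0.
rewrite !mxE (eq_bigr (fun k => C k j ^+ 2)) => [|k _]; last by rewrite mxE expr2.
by rewrite psumr_eq0 => [/allP/(_ i (mem_index_enum _))|k _]; rewrite ?sqr_ge0.
Qed.

Lemma tr_mulmx_self_gt0 (R : realDomainType) n (w : 'cV[R]_n) :
  w != 0 -> 0 < (w^T *m w) 0 0.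
Proof.
rewrite -tr_mulmx_self_eq0 => ww0; rewrite lt0r; apply/andP; split.
  by apply: contraNneq ww0 => ww00; apply/eqP/matrixP => i j; rewrite !ord1 ww00 mxE.
by rewrite mxE sumr_ge0 // => k _; rewrite mxE -expr2 sqr_ge0.
Qed.

Lemma row_free_mul_tr_unit (R : realFieldType) r n (M : 'M[R]_(r, n)) :
  row_free M -> M *m M^T \in unitmx.
Proof.
move=> freeM; rewrite unitmxE unitfE; apply/det0P => -[v].
rewrite -(mulmx_free_eq0 _ freeM) -trmx_eq0 -tr_mulmx_self_eq0 trmxK trmx_mul.
by rewrite !mulmxA => /negP nz vMM0; apply: nz; rewrite vMM0 mul0mx.
Qed.

Section MoorePenrose.
Variable R : realType.

Lemma penrose_full_rank_factor m r n (F : 'M[R]_(m, r)) (G : 'M[R]_(r, n)) :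
  F^T *m F \in unitmx -> G *m G^T \in unitmx ->
  penrose (F *m G) (G^T *m invmx (G *m G^T) *m invmx (F^T *m F) *m F^T).
Proof.
set Fi := invmx (F^T *m F); set Gi := invmx (G *m G^T) => uF uG.
have FiT : Fi^T = Fi by rewrite trmx_inv trmx_mul trmxK.
have GiT : Gi^T = Gi by rewrite trmx_inv trmx_mul trmxK.
have FiF : Fi *m F^T *m F = 1%:M by rewrite -mulmxA mulVmx.
have GGi : G *m G^T *m Gi = 1%:M by rewrite mulmxV.
have AX : F *m G *m (G^T *m Gi *m Fi *m F^T) = F *m Fi *m F^T.
  by rewrite !mulmxA -(mulmxA F) -(mulmxA F) GGi mulmx1.
have XA : G^T *m Gi *m Fi *m F^T *m (F *m G) = G^T *m Gi *m G.
  by rewrite !mulmxA -!(mulmxA _ Fi) -(mulmxA _ (Fi *m _)) FiF mulmx1.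
split.
- by rewrite AX !mulmxA -(mulmxA _ Fi) -(mulmxA _ (Fi *m _)) FiF mulmx1.
- by rewrite XA !mulmxA -(mulmxA _ G) -(mulmxA _ (G *m _)) GGi mulmx1.
- by rewrite AX !trmx_mul trmxK FiT mulmxA.
- by rewrite XA !trmx_mul trmxK GiT mulmxA.
Qed.

Lemma penrose_exists m n (A : 'M[R]_(m, n)) : exists X, penrose A X.
Proof.
have uF : (col_base A)^T *m col_base A \in unitmx.
  rewrite -[X in _ *m X]trmxK row_free_mul_tr_unit // /row_free mxrank_tr.
  exact: col_base_full.
have uG := row_free_mul_tr_unit (row_base_free A).
by have := penrose_full_rank_factor uF uG; rewrite mulmx_base => XA; eexists; exact: XA.
Qed.

Lemma pinvP m n (A : 'M[R]_(m, n)) : penrose A (pinv A).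
Proof. exact: epsilon_spec (penrose_exists A). Qed.

Lemma mulmx_gram_ginv m n (A : 'M[R]_(m, n)) (X : 'M[R]_n) :
  A^T *m A *m X *m (A^T *m A) = A^T *m A -> A *m X *m (A^T *m A) = A.
Proof.
move=> BXB; apply/eqP; rewrite -subr_eq0 -tr_mulmx_self_eq0.
set C := _ - A.
have CA : C^T *m A = 0.
  apply/eqP; rewrite -trmx_eq0 trmx_mul trmxK mulmxBr !mulmxA.
  by rewrite !mulmxA in BXB; rewrite BXB subrr.
by rewrite {2}/C mulmxBr !mulmxA CA !mul0mx subrr.
Qed.

Lemma tr_mulmx_projm m n (A : 'M[R]_(m, n)) : A^T *m projm A = A^T.
Proof.
have [BXB _ _ _] := pinvP (A^T *m A).
have BXtB : A^T *m A *m (pinv (A^T *m A))^T *m (A^T *m A) = A^T *m A.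
  by have := congr1 trmx BXB; rewrite !trmx_mul trmxK !mulmxA.
have := congr1 trmx (mulmx_gram_ginv BXtB).
by rewrite !trmx_mul !trmxK /projm !mulmxA.
Qed.

Lemma projm_add_eq1 N a b (L : 'M[R]_(N, a)) (M : 'M[R]_(N, b)) :
  M^T *m L = 0 ->
  (forall z : 'cV[R]_N, L^T *m z = 0 -> M^T *m z = 0 -> z = 0) ->
  projm L + projm M = 1%:M.
Proof.
move=> ML ker0.
have LM : L^T *m M = 0 by apply/eqP; rewrite -trmx_eq0 trmx_mul trmxK ML.
apply/eqP; rewrite eq_sym -subr_eq0; apply/eqP.
set E := 1%:M - _.
have LE : L^T *m E = 0.
  by rewrite mulmxBr mulmx1 mulmxDr tr_mulmx_projm /projm !mulmxA LM !mul0mx addr0 subrr.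
have ME : M^T *m E = 0.
  by rewrite mulmxBr mulmx1 mulmxDr tr_mulmx_projm /projm !mulmxA ML !mul0mx add0r subrr.
apply/matrixP => i j; have := ker0 (col j E).
rewrite !colE !mulmxA LE ME !mul0mx -colE => /(_ erefl erefl)/matrixP/(_ i 0).
by rewrite !mxE.
Qed.
End MoorePenrose.

Lemma tr_horner_mx (R : comNzRingType) n (A : 'M[R]_n.+1) (q : {poly R}) :
  A^T = A -> (horner_mx A q)^T = horner_mx A q.
Proof.
move=> sA; elim/poly_ind: q => [|p c IHp]; first by rewrite rmorph0 trmx0.
rewrite rmorphD rmorphM /= horner_mx_X horner_mx_C linearD /= trmx_mul IHp sA.
by rewrite tr_scalar_mx (comm_mx_horner p (erefl : comm_mx A A)).
Qed.

Section Diagonalized.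
Variables (R : rcfType) (n : nat) (A : 'M[R]_n.+1).
Variables (P : 'M[R[i]]_n.+1) (lam : 'I_n.+1 -> R).
Local Notation toC := (real_complex R).
Hypotheses (Pu : P \in unitmx)
  (AE : map_mx toC A = invmx P *m diag_mx (\row_i toC (lam i)) *m P).

Lemma map_horner_mx_diag q :
  map_mx toC (horner_mx A q) = invmx P *m diag_mx (\row_i toC q.[lam i]) *m P.
Proof.
rewrite map_horner_mx AE (@horner_mx_uconjC _ _ _ P); last exact: Pu.
rewrite horner_mx_diag; apply: (congr1 (fun d => invmx P *m diag_mx d *m P)).
by apply/rowP => i; rewrite !mxE horner_map.
Qed.

Lemma horner_mx_eigval_eq q r :
  (forall i, q.[lam i] = r.[lam i]) -> horner_mx A q = horner_mx A r.
Proof.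
move=> qr; apply: (@map_mx_inj _ _ toC); rewrite !map_horner_mx_diag.
apply: (congr1 (fun d => invmx P *m diag_mx d *m P)).
by apply/rowP => i; rewrite !mxE qr.
Qed.

Lemma horner_mx_eq0 q : horner_mx A q = 0 -> forall i, q.[lam i] = 0.
Proof.
move=> q0 i; have := congr1 (fun M => P *m M *m invmx P) (map_horner_mx_diag q).
rewrite q0 map_mx0 mulmx0 mul0mx !mulmxA mulmxK // mulmxV // mul1mx.
by move=> /matrixP/(_ i i)/esym/eqP; rewrite !mxE eqxx mulr1n fmorph_eq0 => /eqP.
Qed.

Lemma mxtrace_horner_mx q : \tr (horner_mx A q) = \sum_i q.[lam i].
Proof.
apply: (@complexI R).
have -> : toC (\tr (horner_mx A q)) = \tr (map_mx toC (horner_mx A q)).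
  by rewrite /mxtrace rmorph_sum; apply: eq_bigr => i _; rewrite mxE.
rewrite map_horner_mx_diag mxtrace_mulC mulmxA mulmxV // mul1mx mxtrace_diag.
by rewrite rmorph_sum; apply: eq_bigr => i _; rewrite mxE.
Qed.

End Diagonalized.

Lemma sym_diagonalizable (R : rcfType) n (A : 'M[R]_n.+1) : A^T = A ->
  exists2 P : 'M[R[i]]_n.+1, P \in unitmx & exists lam : 'I_n.+1 -> R,
    map_mx (real_complex R) A = invmx P *m diag_mx (\row_i real_complex R (lam i)) *m P.
Proof.
move=> sA; set AC := map_mx _ A.
have AC_herm : AC \is hermsymmx.
  apply: realsym_hermsym.
    apply/is_hermitianmxP; rewrite expr0 scale1r map_trmx sA.
    by apply/matrixP => i j; rewrite !mxE.
  by apply/mxOverP => i j; rewrite mxE; apply/complex_realP; exists (A i j).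
have /orthomx_spectralP ACE := hermitian_normalmx AC_herm.
have /mxOverP dR := hermitian_spectral_diag_real AC_herm.
exists (spectralmx AC); first exact: spectral_unit.
exists (fun i => complex.Re (spectral_diag AC 0 i)).
have dE : spectral_diag AC = \row_i real_complex R (complex.Re (spectral_diag AC 0 i)).
  by apply/rowP => i; rewrite mxE RRe_real // dR.
by rewrite dE in ACE.
Qed.

Section PositiveDefinite.
Variable R : realType.

Lemma spd_unit n (A : 'M[R]_n) : spd A -> A \in unitmx.
Proof.
case=> _ Apd; rewrite unitmxE unitfE; apply/det0P => -[v].
by rewrite -trmx_eq0 => /Apd + vA0; rewrite trmxK vA0 mul0mx mxE ltxx.
Qed.

Lemma spd_mxtrace_gt0 m n (A : 'M[R]_m) (B : 'M[R]_(m, n)) :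
  spd A -> B != 0 -> 0 < \tr (B^T *m A *m B).
Proof.
case=> _ Apd B0; have [j Bj] : exists j, col j B != 0.
  apply/existsP; apply: contraNT B0 => /existsPn colB0; apply/eqP/matrixP => i j.
  by have /negPn/eqP/colP/(_ i) := colB0 j; rewrite !mxE.
have quadE k : (B^T *m A *m B) k k = ((col k B)^T *m A *m col k B) 0 0.
  by rewrite tr_col -row_mul !mxE; apply: eq_bigr => l _; rewrite !mxE.
rewrite /mxtrace (bigD1 j) //= quadE; apply: (lt_le_trans (Apd _ Bj)).
rewrite lerDl sumr_ge0 // => k _; rewrite quadE.
by have [->|/Apd/ltW//] := eqVneq (col k B) 0; rewrite mulmx0 mxE.
Qed.

Lemma spd_eigval_gt0 n (A : 'M[R]_n.+1) (P : 'M[R[i]]_n.+1) (lam : 'I_n.+1 -> R) :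
  P \in unitmx ->
  map_mx (real_complex R) A = invmx P *m diag_mx (\row_i real_complex R (lam i)) *m P ->
  spd A -> forall i, 0 < lam i.
Proof.
move=> Pu AE Aspd.
have [q qE] := lagrange_interpolation (fun x : R => if x <= 0 then 1 else 0) (codom lam).
(* B = q(A) projects onto the eigenvectors with nonpositive eigenvalues. *)
pose B := horner_mx A q.
have trBAB : \tr (B^T *m A *m B) <= 0.
  have -> : B^T *m A *m B = horner_mx A (q * 'X * q).
    by rewrite tr_horner_mx ?Aspd.1 // !rmorphM /= horner_mx_X.
  rewrite (mxtrace_horner_mx Pu AE) sumr_le0 // => i _.
  by rewrite !hornerE qE ?codom_f //; case: ifP => h; rewrite ?mul1r ?mulr1 ?mul0r.
have B0 : B = 0.
  by apply/eqP; apply: contraTT trBAB; rewrite -ltNge; apply: spd_mxtrace_gt0.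
move=> i; have := horner_mx_eq0 Pu AE B0 i; rewrite qE ?codom_f //.
by case: ifP => [_ /eqP|/negbT + _]; rewrite ?oner_eq0 // ltNge.
Qed.

Lemma spd_fourth_root n (A : 'M[R]_n.+1) : spd A ->
  exists2 T, T^T = T & T *m T *m T *m T = A.
Proof.
move=> Aspd; have [P Pu [lam AE]] := sym_diagonalizable Aspd.1.
have [q qE] := lagrange_interpolation (fun x : R => Num.sqrt (Num.sqrt x)) (codom lam).
exists (horner_mx A q); first exact: tr_horner_mx Aspd.1.
have -> : horner_mx A q *m horner_mx A q *m horner_mx A q *m horner_mx A q =
    horner_mx A (q * q * q * q) by rewrite !rmorphM.
rewrite -[RHS]horner_mx_X; apply: (horner_mx_eigval_eq Pu AE) => i.
have sqrtK x : 0 <= x -> Num.sqrt x * Num.sqrt x = x by move=> ?; rewrite -expr2 sqr_sqrtr.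
rewrite !hornerE qE ?codom_f // sqrtK ?sqrtr_ge0 // -mulrA sqrtK ?sqrtr_ge0 //.
by rewrite sqrtK // ltW // (spd_eigval_gt0 Pu AE Aspd).
Qed.

Lemma spd_sqrt_exists n (A : 'M[R]_n) : spd A -> exists S, spd S /\ S *m S = A.
Proof.
case: n A => [|n] A Aspd.
  exists 0; rewrite [A]flatmx0 [_ *m _]flatmx0; split=> //.
  by split=> [|v]; rewrite ?[_^T]flatmx0 // [v]flatmx0 eqxx.
have [T sT T4] := spd_fourth_root Aspd.
exists (T *m T); split; last by rewrite mulmxA T4.
split=> [|v v0]; first by rewrite trmx_mul sT.
(* v^T T^2 v = |T v|^2, and T v <> 0 because A v = T^3 (T v). *)
have -> : v^T *m (T *m T) *m v = (T *m v)^T *m (T *m v) by rewrite trmx_mul sT !mulmxA.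
apply: tr_mulmx_self_gt0; apply/eqP => Tv0.
by have := Aspd.2 v v0; rewrite -T4 -!mulmxA Tv0 !mulmx0 mxE ltxx.
Qed.

Lemma sqrtm_spec n (A : 'M[R]_n) : spd A ->
  [/\ (sqrtm A)^T = sqrtm A, sqrtm A \in unitmx & sqrtm A *m sqrtm A = A].
Proof.
by move=> /spd_sqrt_exists/(epsilon_spec (inhabits 0)) [Sspd SS]; split;
  [exact: Sspd.1 | exact: spd_unit |].
Qed.

End PositiveDefinite.

Section QuasiHelmholtz.
Variables (R : realType) (N a b : nat) (X : 'M[R]_(N, a)) (Y : 'M[R]_(N, b)).
Hypotheses (XY : X^T *m Y = 0)
  (XY_span : forall x : 'cV[R]_N, exists s l, x = X *m s + Y *m l).

Lemma helmholtz_ker_eq0 (K : 'M[R]_N) (w : 'cV[R]_N) :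
  spd K -> X^T *m w = 0 -> Y^T *m (K *m w) = 0 -> w = 0.
Proof.
move=> [_ Kpd] Xw YKw; have [s [l wE]] := XY_span w.
have Xs0 : X *m s = 0.
  move: Xw; rewrite wE mulmxDr !mulmxA XY mul0mx addr0 => XXs.
  by apply/eqP; rewrite -tr_mulmx_self_eq0 trmx_mul -mulmxA (mulmxA X^T) XXs mulmx0.
apply/eqP; apply: contraT => /Kpd.
by rewrite -mulmxA {1}wE Xs0 add0r trmx_mul -mulmxA YKw mulmx0 mxE ltxx.
Qed.

Lemma projm_normalized_add_eq1 (K : 'M[R]_N) (T : 'M[R]_a) (U : 'M[R]_b) :
  spd K -> T \in unitmx -> U \in unitmx ->
  projm (sqrtm K *m Y *m invmx U) + projm (invmx (sqrtm K) *m X *m T) = 1%:M.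
Proof.
move=> Kspd uT uU; have [sS uS SS] := sqrtm_spec Kspd.
move: (sqrtm K) sS uS SS => S sS uS SS; apply: projm_add_eq1.
  by rewrite !trmx_mul trmx_inv sS !mulmxA mulmxKV // -(mulmxA _ X^T) XY mulmx0 mul0mx.
move=> z; rewrite !trmx_mul !trmx_inv sS -!mulmxA => Lz Mz.
have Xw : X^T *m (invmx S *m z) = 0.
  by have := congr1 (mulmx (invmx T^T)) Mz; rewrite mulKmx ?unitmx_tr // mulmx0.
have YKw : Y^T *m (K *m (invmx S *m z)) = 0.
  rewrite -SS -mulmxA mulKVmx //.
  by have := congr1 (mulmx U^T) Lz; rewrite mulKVmx ?unitmx_tr // mulmx0.
by rewrite -(mulKVmx uS z) (helmholtz_ker_eq0 Kspd Xw YKw) mulmx0.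
Qed.

End QuasiHelmholtz.

Theorem mainTheorem7 (R : realType) (N NS NL : nat)
  (cp cm : 'I_N -> 'I_NS) (va vb : 'I_N -> 'I_NL)
  (Hc : forall m, cp m != cm m) (Hv : forall m, va m != vb m)
  (HSL : (starRWG R cp cm)^T *m loopRWG R va vb = 0)
  (Hspan : forall x : 'cV[R]_N, exists (s : 'cV[R]_NS) (l : 'cV[R]_NL),
      x = starRWG R cp cm *m s + loopRWG R va vb *m l)
  (G : 'M[R]_N) (Gp : 'M[R]_NS) (Gl : 'M[R]_NL)
  (GG : 'M[R]_N) (Gpt : 'M[R]_NL) (Glt : 'M[R]_NS)
  (HG : spd G) (HGp : spd Gp) (HGl : spd Gl)
  (HGG : spd GG) (HGpt : spd Gpt) (HGlt : spd Glt) :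
  let Sig := starRWG R cp cm in
  let Lam := loopRWG R va vb in
  let Sigt := invmx (sqrtm G) *m Sig *m sqrtm Gp in
  let Lamt := sqrtm G *m Lam *m invmx (sqrtm Gl) in
  let SigtD := sqrtm GG *m Sig *m invmx (sqrtm Glt) in
  let LamtD := invmx (sqrtm GG) *m Lam *m sqrtm Gpt in
  projm Lamt + projm Sigt = 1%:M /\ projm LamtD + projm SigtD = 1%:M.
Proof.
move=> Sig Lam Sigt Lamt SigtD LamtD.
have unit_sqrtm n (A : 'M[R]_n) : spd A -> sqrtm A \in unitmx by case/sqrtm_spec.
have LS : Lam^T *m Sig = 0 by apply/eqP; rewrite -trmx_eq0 trmx_mul trmxK HSL.
have span_LS (x : 'cV[R]_N) : exists l s, x = Lam *m l + Sig *m s.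
  by have [s [l ->]] := Hspan x; exists l, s; rewrite addrC.
split.
  exact (projm_normalized_add_eq1 HSL Hspan HG (unit_sqrtm _ _ HGp) (unit_sqrtm _ _ HGl)).
rewrite addrC.
exact (projm_normalized_add_eq1 LS span_LS HGG (unit_sqrtm _ _ HGpt) (unit_sqrtm _ _ HGlt)).
Qed.
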